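(* For $\varepsilon\ge0$ let $\psi_\varepsilon(a,b)=a+b-\sqrt{a^2+b^2+2\varepsilon^2}$, $\Psi_\varepsilon(y,z)=(\psi_\varepsilon(y_1,z_1),\dots,\psi_\varepsilon(y_p,z_p))$ for $y,z\in\mathbb R^p$, and $\Theta(\varepsilon)=\{(y,z)\in\mathbb R^p\times\mathbb R^p:\Psi_\varepsilon(y,z)=0\}$. Then $\lim_{\varepsilon\searrow0}\Theta(\varepsilon)=\Theta(0)$ in the sense of Painlevé–Kuratowski set convergence, where $\Theta(0)=\{(y,z):0\le y\perp z\ge0\}$.
   Context: Painlevé–Kuratowski convergence means $\limsup_{\varepsilon\searrow0}\Theta(\varepsilon)\subset\Theta(0)\subset\liminf_{\varepsilon\searrow0}\Theta(\varepsilon)$ (outer and inner limits of sets). *)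

From HB Require Import structures.
From mathcomp Require Import all_boot all_order all_algebra.
From mathcomp Require Import all_classical all_reals all_analysis.
Set Implicit Arguments. Unset Strict Implicit. Unset Printing Implicit Defensive.
Import Order.TTheory GRing.Theory Num.Theory.
Import numFieldNormedType.Exports.
Local Open Scope classical_set_scope.
Local Open Scope ring_scope.

Definition outer_limit0 (R : realType) (T : topologicalType) (S : R -> set T) : set T :=
  [set x | exists (e : nat -> R) (u : nat -> T),
     [/\ (forall k, 0 < e k), e @ \oo --> 0, (forall k, S (e k) (u k)) & u @ \oo --> x]].

Definition inner_limit0 (R : realType) (T : topologicalType) (S : R -> set T) : set T :=
  [set x | forall e : nat -> R, (forall k, 0 < e k) -> e @ \oo --> 0 ->
     exists u : nat -> T, (\forall k \near \oo, S (e k) (u k)) /\ u @ \oo --> x].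

Definition PK_converges0 (R : realType) (T : topologicalType) (S : R -> set T) (A : set T) : Prop :=
  outer_limit0 S `<=` A /\ A `<=` inner_limit0 S.

Definition psi (R : realType) (eps a b : R) : R :=
  a + b - Num.sqrt (a ^+ 2 + b ^+ 2 + 2 * eps ^+ 2).

Definition Theta (R : realType) (p : nat) (eps : R) : set ('rV[R]_p * 'rV[R]_p) :=
  [set yz : 'rV[R]_p * 'rV[R]_p | forall i : 'I_p, psi eps (yz.1 ord0 i) (yz.2 ord0 i) = 0].

Definition compl_set (R : realType) (p : nat) : set ('rV[R]_p * 'rV[R]_p) :=
  [set yz : 'rV[R]_p * 'rV[R]_p | (forall i, 0 <= yz.1 ord0 i) /\ (forall i, 0 <= yz.2 ord0 i) /\
            \sum_(i < p) yz.1 ord0 i * yz.2 ord0 i = 0].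

(** Each coordinate of [Theta eps] is the curve [{a, b >= 0, a b = eps^2}], the
    zero set of the jointly continuous map [(eps, a, b) |-> psi eps a b]; at
    [eps = 0] it is the complementarity corner [{a, b >= 0, a b = 0}].  Closedness of
    the zero set of a continuous map gives the outer-limit inclusion.  For the
    inner limit, a point [(a, b)] of the corner is pushed onto the curve at level
    [eps] by adding the same [t] to both coordinates, where [t] is the positive root
    of [t (a + b + t) = eps^2]; since [0 <= t <= eps], these points tend to [(a, b)]. *)

From HB Require Import structures.
From mathcomp Require Import all_boot all_order all_algebra.
From mathcomp Require Import all_classical all_reals all_analysis.
From mathcomp Require Import ring lra.
Import Order.TTheory GRing.Theory Num.Theory.
Import numFieldNormedType.Exports.
Local Open Scope classical_set_scope.
Local Open Scope ring_scope.

Section Psi.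
Context {R : realType}.
Implicit Types eps a b s : R.

Lemma psi_eq0 eps a b : psi eps a b = 0 <-> [/\ 0 <= a, 0 <= b & a * b = eps ^+ 2].
Proof.
rewrite /psi; split.
- move/eqP; rewrite subr_eq0 => /eqP sqrt_eq.
  have sum_ge0 : 0 <= a + b by rewrite sqrt_eq sqrtr_ge0.
  have sqr_eq : (a + b) ^+ 2 = a ^+ 2 + b ^+ 2 + 2 * eps ^+ 2.
    by rewrite sqrt_eq sqr_sqrtr //; nra.
  have ab_eq : a * b = eps ^+ 2 by nra.
  have prod_ge0 : 0 <= a * b by rewrite ab_eq sqr_ge0.
  by split => //; nra.
- case=> a_ge0 b_ge0 ab_eq.
  have -> : a ^+ 2 + b ^+ 2 + 2 * eps ^+ 2 = (a + b) ^+ 2 by rewrite -ab_eq; ring.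
  by rewrite sqrtr_sqr ger0_norm ?subrr // addr_ge0.
Qed.

Lemma psi0_eq0 a b : psi 0 a b = 0 <-> [/\ 0 <= a, 0 <= b & a * b = 0].
Proof. by rewrite psi_eq0 expr0n. Qed.

Lemma cvg_psi {T : Type} {F : set_system T} {FF : Filter F} {e a b : T -> R} {eps0 a0 b0} :
  e @ F --> eps0 -> a @ F --> a0 -> b @ F --> b0 ->
  psi (e t) (a t) (b t) @[t --> F] --> psi eps0 a0 b0.
Proof.
move=> e_cvg a_cvg b_cvg; apply: cvgB; first exact: cvgD.
have sqr_cvg (f : T -> R) (x : R) : f @ F --> x -> f t ^+ 2 @[t --> F] --> x ^+ 2.
  exact: (continuous_cvg _ (@exprn_continuous R 2 x)).
apply: (continuous_cvg _ (@sqrt_continuous R _)).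
by apply: cvgD; [apply: cvgD|apply: cvgM; [exact: cvg_cst|]]; exact: sqr_cvg.
Qed.

(** The positive root of [t (s + t) = eps^2]. *)
Definition compl_shift s eps : R := (Num.sqrt (s ^+ 2 + 4 * eps ^+ 2) - s) / 2.

Lemma compl_shift_bounds {s eps} : 0 <= s -> 0 <= eps ->
  0 <= compl_shift s eps <= eps.
Proof.
move=> s_ge0 eps_ge0; rewrite /compl_shift.
have sqrt_ge : s <= Num.sqrt (s ^+ 2 + 4 * eps ^+ 2).
  rewrite -[X in X <= _](ger0_norm s_ge0) -sqrtr_sqr ler_wsqrtr //.
  by rewrite lerDl mulr_ge0 ?sqr_ge0.
have sqrt_le : Num.sqrt (s ^+ 2 + 4 * eps ^+ 2) <= s + 2 * eps.
  have s2e_ge0 : 0 <= s + 2 * eps by rewrite addr_ge0 ?mulr_ge0.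
  rewrite -[X in _ <= X](ger0_norm s2e_ge0) -sqrtr_sqr ler_wsqrtr //.
  have -> : (s + 2 * eps) ^+ 2 = s ^+ 2 + 4 * eps ^+ 2 + 4 * (s * eps) by ring.
  by rewrite lerDl !mulr_ge0.
by apply/andP; split; lra.
Qed.

Lemma compl_shift_root s eps : compl_shift s eps * (s + compl_shift s eps) = eps ^+ 2.
Proof.
rewrite /compl_shift; set D := Num.sqrt _.
have D2 : D ^+ 2 = s ^+ 2 + 4 * eps ^+ 2 by rewrite sqr_sqrtr //; nra.
have -> : (D - s) / 2 * (s + (D - s) / 2) = (D ^+ 2 - s ^+ 2) / 4 by field.
by rewrite D2; field.
Qed.

Lemma psi_compl_shift eps a b : 0 <= eps -> psi 0 a b = 0 ->
  psi eps (a + compl_shift (a + b) eps) (b + compl_shift (a + b) eps) = 0.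
Proof.
move=> eps_ge0 /psi0_eq0[a_ge0 b_ge0 ab0].
have /andP[t_ge0 _] := compl_shift_bounds (addr_ge0 a_ge0 b_ge0) eps_ge0.
apply/psi_eq0; split; rewrite ?addr_ge0 //.
rewrite -(compl_shift_root (a + b)).
have -> : forall t, (a + t) * (b + t) = a * b + t * (a + b + t) by move=> t; ring.
by rewrite ab0 add0r.
Qed.

End Psi.

Lemma cvg_mx_le0 {K : realFieldType} {T : Type} {F : set_system T} {FF : Filter F}
    {m n} {v : T -> 'M[K]_(m, n)} {e : T -> K} :
  (forall t, 0 <= e t) -> (forall t i j, `|v t i j| <= e t) -> e @ F --> 0 ->
  v @ F --> (0 : 'M[K]_(m, n)).
Proof.
move=> e_ge0 v_le e_cvg; apply/norm_cvg0P.
apply: (squeeze_cvgr _ (cvg_cst 0) e_cvg); apply: nearW => t.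
rewrite normr_ge0 /= [`|v t|]mx_normrE.
by apply: bigmax_le => // -[i j] _; exact: v_le.
Qed.

Section Theta.
Variables (R : realType) (p : nat).

Lemma Theta0E : Theta 0 = @compl_set R p.
Proof.
apply/seteqP; split => -[y z] /=.
- move=> yz_Theta; have yz_i i := iffLR (psi0_eq0 _ _) (yz_Theta i).
  split; [by move=> i; case: (yz_i i)|split; first by move=> i; case: (yz_i i)].
  by apply: big1 => i _; case: (yz_i i).
- case=> y_ge0 [z_ge0 yz0] i; apply/psi0_eq0; split => //.
  by apply: (psumr_eq0P _ yz0) => // j _; exact: mulr_ge0.
Qed.

Lemma outer_limit0_Theta : outer_limit0 (@Theta R p) `<=` Theta 0.
Proof.
move=> [y z] [e [u [_ e_cvg u_Theta u_cvg]]] i.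
have coord_cvg (w : nat -> 'rV[R]_p) (x : 'rV[R]_p) :
    w @ \oo --> x -> w k ord0 i @[k --> \oo] --> x ord0 i.
  exact: (continuous_cvg _ (@coord_continuous R 1 p ord0 i x)).
have psi_cvg : psi (e k) ((u k).1 ord0 i) ((u k).2 ord0 i) @[k --> \oo]
    --> psi 0 (y ord0 i) (z ord0 i).
  apply: cvg_psi e_cvg _ _; apply: coord_cvg.
    exact: cvg_comp u_cvg cvg_fst.
  exact: cvg_comp u_cvg cvg_snd.
have psi_u0 : (fun k => psi (e k) ((u k).1 ord0 i) ((u k).2 ord0 i)) = fun=> 0.
  by apply/funext => k; exact: u_Theta.
rewrite psi_u0 in psi_cvg.
exact/esym/(cvg_unique _ (cvg_cst 0) psi_cvg).
Qed.

Lemma Theta0_sub_inner_limit0 : Theta 0 `<=` inner_limit0 (@Theta R p).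
Proof.
move=> [y z] yz_Theta e e_gt0 e_cvg /=.
have e_ge0 k := ltW (e_gt0 k).
pose shift k := \row_i compl_shift (y ord0 i + z ord0 i) (e k) : 'rV[R]_p.
have shift_bounds k i : 0 <= shift k ord0 i <= e k.
  have /psi0_eq0[y_ge0 z_ge0 _] := yz_Theta i.
  by rewrite mxE compl_shift_bounds ?addr_ge0.
exists (fun k => (y + shift k, z + shift k)); split.
  by apply: nearW => k i /=; rewrite !mxE psi_compl_shift.
have shift_cvg : shift k @[k --> \oo] --> (0 : 'rV[R]_p).
  apply: (cvg_mx_le0 e_ge0 _ e_cvg) => k i j.
  by have /andP[t_ge0 t_le] := shift_bounds k j; rewrite ord1 ger0_norm.
have shifted_cvg (x : 'rV[R]_p) : x + shift k @[k --> \oo] --> x.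
  by rewrite -[X in _ --> X]addr0; apply: cvgD => //; exact: cvg_cst.
exact: cvg_pair (shifted_cvg y) (shifted_cvg z).
Qed.

End Theta.

Theorem lemma4p2 (R : realType) (p : nat) :
  @Theta R p 0 = @compl_set R p /\ PK_converges0 (@Theta R p) (@Theta R p 0).
Proof.
split; first exact: Theta0E.
by split; [exact: outer_limit0_Theta | exact: Theta0_sub_inner_limit0].
Qed.
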